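(* Let $G$ be a countable infinite discrete group, $X$ an infinite compact Hausdorff space and $\alpha: G\curvearrowright X$ a continuous action such that there is no $G$-invariant regular Borel probability measure on $X$. Consider: (i) $\alpha$ has dynamical comparison; (ii) $\alpha$ has paradoxical comparison; (iii) $\alpha$ has weak paradoxical comparison. Then (i)$\Rightarrow$(ii)$\Rightarrow$(iii). If moreover $\alpha$ is minimal, then (i), (ii), (iii) are equivalent.
   Context: Subequivalence: for closed $F\subset X$ and open $O\subset X$, $F\prec O$ if there exist a finite collection $\mathcal{U}$ of open sets covering $F$ and $s_U\in G$ with the sets $s_UU$, $U\in\mathcal{U}$, pairwise disjoint subsets of $O$; for open $V$, $V\prec O$ means $F\prec O$ for every closed $F\subset V$. Dynamical comparison: $V\prec O$ for every open $V$ and nonempty open $O$ with $\mu(V)<\mu(O)$ for all $G$-invariant regular Borel probability measures $\mu$ (when there are no such measures, this means $V\prec O$ for all open $V$ and nonempty open $O$). Paradoxical comparison: for every nonempty open $O$ and closed $F\subset O$ there are disjoint nonempty open $O_1,O_2\subset O$ with $F\prec O_1$ and $F\prec O_2$. Weak paradoxical comparison: for every closed $F$ and nonempty open $O$ with $F\subset G\cdot O=\bigcup_{g\in G}gO$, one has $F\prec O$. *)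

From HB Require Import structures.
From mathcomp Require Import all_boot all_order all_algebra.
From mathcomp Require Import all_classical all_reals all_analysis.
From mathcomp Require Import Rstruct Rstruct_topology.
Set Implicit Arguments. Unset Strict Implicit. Unset Printing Implicit Defensive.
Import Order.TTheory GRing.Theory Num.Theory.
Local Open Scope classical_set_scope.
Local Open Scope ring_scope.

Record is_group (G : Type) (mul : G -> G -> G) (one : G) (inv : G -> G) : Prop :=
  { grp_assoc : forall a b c, mul a (mul b c) = mul (mul a b) c;
    grp_mul1g : forall a, mul one a = a;
    grp_mulVg : forall a, mul (inv a) a = one }.

Record is_action (G X : Type) (mul : G -> G -> G) (one : G) (act : G -> X -> X)
  : Prop :=
  { act1 : forall x, act one x = x;
    actM : forall g h x, act (mul g h) x = act g (act h x) }.

Section Dyn.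
Context (G : Type) (X : topologicalType) (act : G -> X -> X).

Definition borel_set (A : set X) : Prop := <<s open >> A.

Definition inv_reg_borel_prob (mu : set X -> Rdefinitions.R) : Prop :=
  [/\ mu set0 = 0,
      (forall A, borel_set A -> 0 <= mu A) /\ mu setT = 1,
      (forall F : nat -> set X, (forall n, borel_set (F n)) ->
          trivIset setT F ->
          (fun n => \sum_(i < n) mu (F i)) @ \oo --> mu (\bigcup_n F n)),
      (forall A, borel_set A ->
          (forall e : Rdefinitions.R, 0 < e -> exists U, [/\ open U, A `<=` U & mu U < mu A + e]) /\
          (forall e : Rdefinitions.R, 0 < e -> exists K, [/\ compact K, K `<=` A & mu A - e < mu K]))
    &
      (forall g A, borel_set A -> mu (act g @` A) = mu A)].

Definition subeq (F O : set X) : Prop :=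
  exists (n : nat) (U : nat -> set X) (s : nat -> G),
    [/\ forall i, (i < n)%N -> open (U i),
        F `<=` \bigcup_(i in [set i | (i < n)%N]) U i,
        forall i, (i < n)%N -> act (s i) @` U i `<=` O
      & forall i j, (i < n)%N -> (j < n)%N -> i <> j ->
          act (s i) @` U i `&` act (s j) @` U j = set0].

Definition subeq_open (V O : set X) : Prop :=
  forall F, closed F -> F `<=` V -> subeq F O.

Definition dynamical_comparison : Prop :=
  forall V O, open V -> open O -> O !=set0 ->
    (forall mu, inv_reg_borel_prob mu -> mu V < mu O) -> subeq_open V O.

Definition paradoxical_comparison : Prop :=
  forall O F, open O -> O !=set0 -> closed F -> F `<=` O ->
    exists O1 O2, [/\ open O1 /\ open O2, O1 !=set0 /\ O2 !=set0,
       O1 `<=` O /\ O2 `<=` O, O1 `&` O2 = set0 & subeq F O1 /\ subeq F O2].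

Definition orbit_set (O : set X) : set X := \bigcup_(g in [set: G]) act g @` O.

Definition weak_paradoxical_comparison : Prop :=
  forall F O, closed F -> open O -> O !=set0 -> F `<=` orbit_set O -> subeq F O.

Definition minimal_action : Prop :=
  forall x : X, closure [set act g x | g in [set: G]] = [set: X].

End Dyn.

From HB Require Import structures.
From mathcomp Require Import all_boot all_order all_algebra finmap.
From mathcomp Require Import all_classical all_reals all_analysis.
From mathcomp Require Import Rstruct Rstruct_topology.
Local Open Scope classical_set_scope.

(* Without invariant measures, dynamical comparison makes every closed set
   subequivalent to every nonempty open set.  As X is infinite, a nonempty
   open O has two points; separating them by Hausdorffness gives two disjoint
   nonempty open subsets of O, each receiving every closed F.
   Given paradoxical comparison and a closed F inside G.O, cover F by
   finitely many g_k^-1 N_k with closure N_k inside O.  Iterating paradoxical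
   comparison gives pairwise disjoint P_k inside O, each receiving the closed
   set K = U_k closure N_k, and g_k^-1 N_k < N_k <= K < P_k assemble into
   F < O.  For a minimal action every orbit meets every nonempty open O, so
   G.O = X and weak paradoxical comparison gives dynamical comparison. *)

Lemma compact_cover_compact {T : topologicalType} {A : set T} :
  compact A -> cover_compact A.
Proof.
have [->|/set0P[a _]] := eqVneq A set0; last first.
  (* [compact_cover] is stated for pointed spaces; [a] provides the point. *)
  pose pT := HB.pack_for ptopologicalType T (isPointed.Build T a).
  by rewrite -[compact A]/(@compact pT A) compact_cover.
by move=> _ I D f _ _; exists fset0.
Qed.

Section Action.
Set Implicit Arguments. Unset Strict Implicit.
Variables (G : Type) (mul : G -> G -> G) (one : G) (inv : G -> G).
Hypothesis HG : is_group mul one inv.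
Variables (X : topologicalType) (act : G -> X -> X).
Hypothesis Hact : is_action mul one act.
Hypothesis Hcont : forall g, continuous (act g).

Lemma actK g : cancel (act g) (act (inv g)).
Proof. by move=> x; rewrite -(actM Hact) (grp_mulVg HG) (act1 Hact). Qed.

Lemma act_inj g : injective (act g).
Proof. exact: can_inj (actK g). Qed.

Lemma open_preimage_act g U : open U -> open (act g @^-1` U).
Proof. by move=> oU; apply: open_comp => // x _; apply: Hcont. Qed.

(* Countably many pieces let witnesses compose without bookkeeping of bounds;
   on closed sets compactness brings back finitely many (csubeq_subeq). *)
Definition csubeq (F O : set X) := exists (U : nat -> set X) (s : nat -> G),
  [/\ forall i, open (U i), F `<=` \bigcup_i U i,
      forall i, act (s i) @` U i `<=` O
    & forall i j, i <> j -> act (s i) @` U i `&` act (s j) @` U j = set0].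

Lemma subeq_csubeq F O : subeq act F O -> csubeq F O.
Proof.
case=> n [U [s [oU FU sUO dU]]].
exists (fun i => if (i < n)%N then U i else set0), s; split.
- by move=> i; case: ifP => [/oU //|_]; exact: open0.
- by move=> x /FU [i /= ilt Uix]; exists i; rewrite ?ilt.
- by move=> i; case: ifP => [/sUO //|_]; rewrite image_set0.
- move=> i j ij; case: ifP => [ilt|_]; last by rewrite image_set0 set0I.
  by case: ifP => [jlt|_]; [exact: dU | rewrite image_set0 setI0].
Qed.

Lemma csubeq_countable (I : countType) F O (U : I -> set X) (s : I -> G) :
  (forall i, open (U i)) -> F `<=` \bigcup_i U i ->
  (forall i, act (s i) @` U i `<=` O) ->
  (forall i j, i <> j -> act (s i) @` U i `&` act (s j) @` U j = set0) ->
  csubeq F O.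
Proof.
move=> oU FU sUO dU.
exists (fun k => if pickle_inv k is Some i then U i else set0).
exists (fun k => if pickle_inv k is Some i then s i else one); split.
- by move=> k; case: (pickle_inv k) => [i|]; [exact: oU | exact: open0].
- by move=> x /FU [i _ Uix]; exists (choice.pickle i); rewrite ?pickleK_inv.
- by move=> k; case: (pickle_inv k) => [i|]; [exact: sUO | rewrite image_set0].
- move=> k l kl.
  case Ek: (pickle_inv k) => [i|]; last by rewrite image_set0 set0I.
  case El: (pickle_inv l) => [j|]; last by rewrite image_set0 setI0.
  apply: dU => ij; apply: kl.
  by rewrite -(@pickle_invK I k) -(@pickle_invK I l) Ek El ij.
Qed.

Lemma csubeq_trans A B C : csubeq A B -> csubeq B C -> csubeq A C.
Proof.
case=> [U [s [oU AU sUB dU]]] [V [t [oV BV sVC dV]]].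
apply: (@csubeq_countable _ A C
  (fun p : nat * nat => U p.1 `&` act (s p.1) @^-1` V p.2)
  (fun p => mul (t p.2) (s p.1))).
- by move=> p; apply: openI => //; exact: open_preimage_act.
- move=> x /AU [i _ Uix].
  have /BV [j _ Vj] : B (act (s i) x) by apply: (sUB i); exists x.
  by exists (i, j).
- move=> [i j] _ [y [_ Vy] <-] /=; rewrite (actM Hact).
  by apply: (sVC j); exists (act (s i) y).
- move=> [i j] [i' j'] ij; apply/disjoints_subset => _ [y [Uy Vy] <-] /=.
  rewrite (actM Hact) => -[y' [Uy' Vy']]; rewrite (actM Hact) => Ey.
  have [jj'|jj'] := eqVneq j j'.
    subst j'; have ii' : i <> i' by move=> ii'; apply: ij; rewrite ii'.
    move/act_inj: Ey => Ey.
    by apply: ((disjoints_subset _ _).1 (dU _ _ ii') (act (s i) y));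
      [exists y | exists y'].
  have := (disjoints_subset _ _).1 (dV _ _ (elimN eqP jj')).
  move=> /(_ (act (t j) (act (s i) y))).
  by apply; [exists (act (s i) y) | exists (act (s i') y')].
Qed.

Lemma csubeq_image A B g : open A -> act g @` A `<=` B -> csubeq A B.
Proof.
move=> oA AB.
apply: (@csubeq_countable unit A B (fun=> A) (fun=> g)) => //.
- by move=> x Ax; exists tt.
- by move=> [] [].
Qed.

Lemma csubeq_bigcup n (A P : nat -> set X) F O :
  F `<=` \bigcup_(k in [set k | (k < n)%N]) A k ->
  (forall k, (k < n)%N -> csubeq (A k) (P k)) ->
  (forall k, (k < n)%N -> P k `<=` O) ->
  (forall k l, (k < n)%N -> (l < n)%N -> k <> l -> P k `&` P l = set0) ->
  csubeq F O.
Proof.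
move=> FA AP PO dP.
have /boolp.choice[US HUS] : forall k, exists US : (nat -> set X) * (nat -> G),
    (k < n)%N ->
   [/\ forall i, open (US.1 i), A k `<=` \bigcup_i US.1 i,
      forall i, act (US.2 i) @` US.1 i `<=` P k
    & forall i j, i <> j ->
        act (US.2 i) @` US.1 i `&` act (US.2 j) @` US.1 j = set0].
  move=> k; have [kn|_] := ltnP k n; last by exists (fun=> set0, fun=> one).
  by have [U [s ?]] := AP k kn; exists (U, s).
apply: (@csubeq_countable _ F O
  (fun p : nat * nat => if (p.1 < n)%N then (US p.1).1 p.2 else set0)
  (fun p => (US p.1).2 p.2)).
- move=> [k i] /=; case: ifP => [kn|_]; last exact: open0.
  by have [] := HUS k kn.
- move=> x /FA [k kn Akx]; have [_ /(_ x Akx) [i _ Uix] _ _] := HUS k kn.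
  by exists (k, i) => //=; rewrite kn.
- move=> [k i] /=; case: ifP => [kn|_]; last by rewrite image_set0.
  by have [_ _ sUP _] := HUS k kn; apply: subset_trans (PO k kn).
- move=> [k i] [l j] /= ne; case: ifP => [kn|_]; last by rewrite image_set0 set0I.
  case: ifP => [ln|_]; last by rewrite image_set0 setI0.
  have [kl|kl] := eqVneq k l.
    subst l; have ij : i <> j by move=> ij; apply: ne; rewrite ij.
    by have [_ _ _ ->] := HUS k kn.
  apply/disjoints_subset => z Pz Qz.
  have [_ _ sUP _] := HUS k kn; have [_ _ sUQ _] := HUS l ln.
  have := (disjoints_subset _ _).1 (dP k l kn ln (elimN eqP kl)).
  by apply; [exact: (sUP i z Pz) | exact: (sUQ j z Qz)].
Qed.

Lemma subeq_subsingleton F O x : subeq act F O -> O `<=` [set x] ->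
  forall a b, F a -> F b -> a = b.
Proof.
move=> [n [U [s [_ FU sUO dU]]]] Ox a b /FU [i ilt Uia] /FU [j jlt Ujb].
have sia : act (s i) a = x by apply/Ox/(sUO i ilt); exists a.
have sjb : act (s j) b = x by apply/Ox/(sUO j jlt); exists b.
have [ij|ij] := eqVneq i j.
  by subst j; apply: (@act_inj (s i)); rewrite sia sjb.
by exfalso; apply: ((disjoints_subset _ _).1 (dU i j ilt jlt (elimN eqP ij)) x);
  [exists a | exists b].
Qed.

Section CompactHausdorff.
Hypotheses (Xhaus : hausdorff_space X) (Xcpt : compact [set: X]).

Lemma closed_compact (A : set X) : closed A -> compact A.
Proof. by move=> cA; exact: subclosed_compact cA Xcpt (subsetT A). Qed.

Lemma open_closure_subset (O : set X) y : open O -> O y ->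
  exists2 N, open N /\ N y & closure N `<=` O.
Proof.
move=> oO Oy.
have : filter_from (nbhs y) closure O.
  exact: (compact_regular Xhaus Xcpt filterT) (open_nbhs_nbhs _).
case=> B; rewrite nbhsE => -[N [oN Ny] NB] cBO.
by exists N => //; apply: subset_trans cBO; exact: closureS.
Qed.

Lemma csubeq_subeq F O : closed F -> csubeq F O -> subeq act F O.
Proof.
move=> cF [U [s [oU FU sUO dU]]].
have [D _ FD] :=
  compact_cover_compact (closed_compact cF) _ _ _ (fun i _ => oU i) FU.
exists (\max_(i <- enum_fset D) i).+1, U, s; split => //.
- move=> x /FD [i /= iD Uix]; exists i => //=.
  by rewrite ltnS; exact: (@leq_bigmax_seq _ _ xpredT id).
- by move=> i j _ _; exact: dU.
Qed.

Lemma closed_image_act g A : closed A -> closed (act g @` A).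
Proof.
move=> cA; apply: compact_closed Xhaus _.
apply: continuous_compact (closed_compact cA).
exact/continuous_subspaceT/Hcont.
Qed.

(* Iterating paradoxical comparison inside a target needs a closed set there:
   the images of the closures of a finite refinement of the cover. *)
Lemma csubeq_closed_target K O : closed K -> csubeq K O ->
  exists2 K', closed K' /\ K' `<=` O & csubeq K K'.
Proof.
move=> cK [U [s [oU KU sUO dU]]].
have /boolp.choice[f Hf] : forall x, exists iN : nat * set X, K x ->
    [/\ open iN.2, iN.2 x & closure iN.2 `<=` U iN.1].
  move=> x; have [Kx|nKx] := pselect (K x); last by exists (0%N, set0).
  have [i _ Uix] := KU x Kx.
  by have [N [oN Nx] NU] := open_closure_subset (oU i) Uix; exists (i, N).
have [D DK KD] : finite_subset_cover K (fun x => (f x).2) K.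
  apply: (compact_cover_compact (closed_compact cK)) => [x /Hf[]//|x Kx].
  by exists x => //; have [] := Hf x Kx.
have {}DK x : x \in D -> K x by move/DK; rewrite in_setE.
pose W i := \bigcup_(x in [set x | x \in D /\ (f x).1 = i]) (f x).2.
have WU i : W i `<=` U i.
  move=> w [x [xD <-] Nxw]; have [_ _ NU] := Hf x (DK x xD).
  exact/NU/subset_closure.
exists (\bigcup_(x in [set` D]) act (s (f x).1) @` closure (f x).2); first split.
- apply: closed_bigcup; first exact: finite_fset.
  by move=> x _; apply/closed_image_act/closed_closure.
- move=> _ [x xD [y Ny <-]]; have [_ _ NU] := Hf x (DK x xD).
  by apply: (sUO (f x).1); exists y => //; exact: NU.
exists W, s; split.
- by move=> i; apply: bigcup_open => x [xD _]; have [] := Hf x (DK x xD).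
- by move=> y /KD [x xD Nxy]; exists (f x).1 => //; exists x.
- move=> i _ [w [x [xD <-] Nxw] <-]; exists x => //.
  by exists w => //; exact: subset_closure.
- move=> i j ij; apply/disjoints_subset => _ [w Ww <-] [w' Ww' Ew'].
  by apply: ((disjoints_subset _ _).1 (dU i j ij) (act (s i) w));
    [exists w => //; exact: WU | exists w' => //; exact: WU].
Qed.

Lemma paradoxical_disjoint_targets n O K : paradoxical_comparison act ->
  open O -> O !=set0 -> closed K -> K `<=` O ->
  exists P : nat -> set X, [/\ forall i, P i `<=` O,
    forall i j, (i < n)%N -> (j < n)%N -> i <> j -> P i `&` P j = set0
  & forall i, (i < n)%N -> csubeq K (P i)].
Proof.
move=> PC; elim: n O K => [|n IH] O K oO O0 cK KO.
  by exists (fun=> O); split => // i.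
have [Q1 [Q2 [[oQ1 oQ2] [_ Q20] [Q1O Q2O] Q12 [KQ1 KQ2]]]] := PC O K oO O0 cK KO.
have [K' [cK' K'Q2] KK'] := csubeq_closed_target cK (subeq_csubeq KQ2).
have [P [PQ2 dP K'P]] := IH Q2 K' oQ2 Q20 cK' K'Q2.
exists (fun i => if i is i'.+1 then P i' else Q1); split.
- by case=> [|i] //=; apply: subset_trans (PQ2 i) Q2O.
- have Q1P i : Q1 `&` P i = set0.
    apply/disjoints_subset => z Q1z /(PQ2 i) Q2z.
    exact: ((disjoints_subset _ _).1 Q12 z Q1z Q2z).
  case=> [|i] [|j] //= ilt jlt ij; first by rewrite setIC.
  by apply: dP => // e; apply: ij; rewrite e.
- case=> [|i] /= ilt; first exact: subeq_csubeq.
  exact: csubeq_trans KK' (K'P i ilt).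
Qed.

Lemma paradoxical_weak_paradoxical :
  paradoxical_comparison act -> weak_paradoxical_comparison act.
Proof.
move=> PC F O cF oO O0 FGO; apply: (csubeq_subeq cF); have [x0 _] := O0.
have /boolp.choice[f Hf] : forall x, exists gN : G * set X, F x ->
    [/\ open gN.2, gN.2 (act gN.1 x) & closure gN.2 `<=` O].
  move=> x; have [Fx|nFx] := pselect (F x); last by exists (one, set0).
  have [g _ [y Oy <-]] := FGO x Fx.
  have [N [oN Ny] NO] := open_closure_subset oO Oy.
  by exists (inv g, N); rewrite /= actK.
pose W x := act (f x).1 @^-1` (f x).2.
have oW x : F x -> open (W x) by move=> /Hf[oN _ _]; exact: open_preimage_act.
have [D DF FD] : finite_subset_cover F W F.
  apply: (compact_cover_compact (closed_compact cF)) => // x Fx.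
  by exists x => //; have [] := Hf x Fx.
have {}DF x : x \in D -> F x by move/DF; rewrite in_setE.
pose K := \bigcup_(x in [set` D]) closure (f x).2.
have cK : closed K.
  by apply: closed_bigcup => [|x _]; [exact: finite_fset | exact: closed_closure].
have KO : K `<=` O by move=> z [x /DF/Hf[_ _ NO] /NO].
pose r := enum_fset D.
have [P [PO dP KP]] := paradoxical_disjoint_targets (size r) PC oO O0 cK KO.
apply: (@csubeq_bigcup (size r) (fun k => W (nth x0 r k)) P) => //.
- move=> x /FD [y yD Wyx]; exists (index y r); first by rewrite /= index_mem.
  by rewrite nth_index.
- move=> k kr; apply: csubeq_trans (KP k kr).
  have yD : nth x0 r k \in D := mem_nth x0 kr.
  apply: (@csubeq_image _ _ (f (nth x0 r k)).1); first exact: oW (DF _ yD).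
  by move=> _ [w Ww <-]; exists (nth x0 r k) => //; exact: subset_closure.
Qed.

End CompactHausdorff.

Lemma dynamical_comparison_subeq F O : (forall mu, ~ inv_reg_borel_prob act mu) ->
  dynamical_comparison act -> closed F -> open O -> O !=set0 -> subeq act F O.
Proof.
move=> Hnomeas DC cF oO O0.
by apply: (DC setT O) => //; [exact: openT | move=> mu /Hnomeas].
Qed.

Lemma dynamical_paradoxical : hausdorff_space X -> ~ finite_set [set: X] ->
  (forall mu, ~ inv_reg_borel_prob act mu) ->
  dynamical_comparison act -> paradoxical_comparison act.
Proof.
move=> Xhaus Xinf Hnomeas DC O F oO [x Ox] cF _.
have subeqF := dynamical_comparison_subeq Hnomeas DC.
have [y [Oy yx]] : exists y, O y /\ y <> x.
  apply: contrapT => O_x; apply: Xinf.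
  suff -> : [set: X] = [set x] by exact: finite_set1.
  apply/seteqP; split => // a _.
  apply: (subeq_subsingleton (x := x) (subeqF _ _ closedT oO _)) => //.
    by exists x.
  by move=> z Oz; apply: contrapT => zx; apply: O_x; exists z.
have /eqP xy : x <> y by move=> xy; apply: yx.
move: Xhaus; rewrite open_hausdorff => /(_ x y xy)[[A B] /=].
rewrite !in_setE => -[Ax By] [oA oB AB].
exists (A `&` O), (B `&` O); split.
- by split; apply: openI.
- by split; [exists x | exists y].
- by split => z [].
- by rewrite setIACA AB set0I.
- split; apply: subeqF => //; try exact: openI.
    by exists x.
  by exists y.
Qed.

Lemma weak_paradoxical_dynamical :
  minimal_action act -> weak_paradoxical_comparison act -> dynamical_comparison act.
Proof.
move=> Hmin WPC V O _ oO O0 _ F cF _; apply: WPC => // x _.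
have [z Oz] := O0.
have : closure [set act g x | g in [set: G]] z by rewrite Hmin.
case/(_ O); first exact: open_nbhs_nbhs.
move=> _ [[g _ <-] Ogx].
by exists (inv g) => //; exists (act g x); rewrite ?actK.
Qed.

End Action.

Theorem proposition4p6 (G : Type) (mul : G -> G -> G) (one : G) (inv : G -> G)
  (HG : is_group mul one inv)
  (Gcount : exists f : G -> nat, injective f)
  (Ginf : ~ finite_set [set: G])
  (X : topologicalType) (Xhaus : hausdorff_space X) (Xcpt : compact [set: X])
  (Xinf : ~ finite_set [set: X])
  (act : G -> X -> X) (Hact : is_action mul one act)
  (Hcont : forall g, continuous (act g))
  (Hnomeas : forall mu : set X -> Rdefinitions.R, ~ inv_reg_borel_prob act mu) :
  (dynamical_comparison act -> paradoxical_comparison act) /\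
  (paradoxical_comparison act -> weak_paradoxical_comparison act) /\
  (minimal_action act ->
     (dynamical_comparison act <-> paradoxical_comparison act) /\
     (paradoxical_comparison act <-> weak_paradoxical_comparison act)).
Proof.
have dc_pc := dynamical_paradoxical HG Hact Xhaus Xinf Hnomeas.
have pc_wpc := paradoxical_weak_paradoxical HG Hact Hcont Xhaus Xcpt.
do 2![split=> //]; move=> Hmin.
have wpc_dc := weak_paradoxical_dynamical HG Hact Hmin.
split; split=> //; first by move/pc_wpc/wpc_dc.
by move/wpc_dc/dc_pc.
Qed.
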